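(* For every $t\in[T]$ and every $x\in\mathbb R^d$ with $\|x\|_2\le1$, the estimates produced by Algorithm 1 satisfy $$\max_{A\in\mathcal A}\mathbb E\Big[\sum_{k=1}^K\langle x,\hat\theta_{t,k}-\tilde\theta_{t,k}\rangle(A)_k\,\Big|\,\mathcal F_{t-1}\Big]\le \frac{m}{t^2}.$$
   Context: Fix integers $K\ge2$, $1\le m<K$, $d\ge1$ and a horizon $T\ge3$. Let $\mathcal A=\{A\in\{0,1\}^K:\sum_{k=1}^K(A)_k\le m\}$, where $(A)_k$ denotes the $k$-th coordinate, and let $\mathrm{conv}(\mathcal A)$ be its convex hull. Contexts are drawn i.i.d. from a distribution $\mathcal D$ on $\mathbb R^d$ with $\|X\|_2\le1$ almost surely and $\Sigma=\mathbb E[XX^\top]\succ0$; $\lambda_{\min}(\Sigma)$ is its smallest eigenvalue. Protocol: in each round $t=1,\dots,T$ the environment fixes vectors $\theta_{t,1},\dots,\theta_{t,K}\in\mathbb R^d$ with $\|\theta_{t,k}\|_2\le1$ (not depending on the learner's actions), a context $X_t\sim\mathcal D$ is drawn independently of the past, the learner observes $X_t$, plays $A_t\in\mathcal A$, suffers $\sum_k\ell_t(X_t,k)(A_t)_k$ and observes $\ell_t(X_t,k)$ for every $k$ with $(A_t)_k=1$; all losses satisfy $\ell_t(x,k)\in[-1,1]$. Let $\mathcal F_t=\sigma(X_1,A_1,\dots,X_t,A_t)$ and $H(a)=-\sum_{k=1}^K a_k\ln a_k$ (with $0\ln 0=0$) for $a\in\mathrm{conv}(\mathcal A)$. Parameters: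 $c_1=\sqrt{(d+\ln T/\lambda_{\min}(\Sigma))K\ln T/(m\ln(K/m))}$, assumed $\ge1$; $c_2=8K/\lambda_{\min}(\Sigma)$; $\beta'_1=c_1$ and $\beta'_{t+1}=\beta'_t+c_1\big(1+(m\ln(K/m))^{-1}\sum_{s=1}^tH(\bar A_s(X_s))\big)^{-1/2}$; $\beta_t=\max\{2,c_2\ln T,\beta'_t\}$; $\eta_t=1/\beta_t$; $\alpha_t=4K\ln(t)/\lambda_{\min}(\Sigma)$; $\gamma_t=\alpha_t\eta_t$; $M_t=\lceil 4K\ln(t)/(\gamma_t\lambda_{\min}(\Sigma))\rceil=\lceil 1/\eta_t\rceil$ (the latter expression also used at $t=1$); $E=\{e_1,\dots,e_K\}\subseteq\mathcal A$ the standard basis vectors. Algorithm 1: set $\tilde\theta_{0,k}=0$. In round $t$: for a context $x$ let $\bar A_t(x)\in\arg\min_{a\in\mathrm{conv}(\mathcal A)}\{\sum_{s=1}^{t-1}\sum_{k}\langle x,\tilde\theta_{s,k}\rangle a_k-H(a)/\eta_t\}$; let $p_t(\cdot|x)$ be any distribution on $\mathcal A$ with $\sum_a p_t(a|x)\,a=\bar A_t(x)$; let $\pi_t(a|x)=(1-\gamma_t)p_t(a|x)+\gamma_t\mathbf 1[a\in E]/K$; sample $A_t\sim\pi_t(\cdot|X_t)$. Then draw $M_t$ fresh independent pairs $X(n)\sim\mathcal D$, $A(n)\sim\pi_t(\cdot|X(n))$, set $C_{n,k}=\prod_{j=1}^n\big(I-(A(j))_kX(j)X(j)^\top/2\big)$,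 $\widehat\Sigma^+_{t,k}=\big(I+\sum_{n=1}^{M_t}C_{n,k}\big)/2$, and $\tilde\theta_{t,k}=\widehat\Sigma^+_{t,k}X_t\,\ell_t(X_t,k)(A_t)_k$ for all $k\in[K]$. Unbiased reference estimator: $\Sigma_{t,k}=\mathbb E[(A_t)_kX_tX_t^\top\mid\mathcal F_{t-1}]$ and $\hat\theta_{t,k}=\Sigma_{t,k}^{-1}X_t\,\ell_t(X_t,k)(A_t)_k$. *)

From HB Require Import structures.
From mathcomp Require Import all_boot all_order all_algebra.
From mathcomp Require Import all_classical all_reals all_analysis.
Set Implicit Arguments. Unset Strict Implicit. Unset Printing Implicit Defensive.
Import Order.TTheory GRing.Theory Num.Theory.
Local Open Scope ring_scope.
Local Open Scope classical_set_scope.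

Section Bandit.
Variable R : realType.

(* A context x in R^d is an element of the measurable space d.-tuple R
   (product Borel sigma-algebra); its column vector: *)
Definition colv (d : nat) (x : d.-tuple R) : 'cV[R]_d := \col_i tnth x i.

Definition dotv (d : nat) (u v : 'cV[R]_d) : R := \sum_i u i 0 * v i 0.
Definition norm2 (d : nat) (u : 'cV[R]_d) : R := Num.sqrt (dotv u u).

Definition posdef (d : nat) (S : 'M[R]_d) : Prop :=
  S^T = S /\ forall v : 'cV[R]_d, v != 0 -> 0 < (v^T *m S *m v) 0 0.

Definition is_lambda_min (d : nat) (S : 'M[R]_d) (lam : R) : Prop :=
  eigenvalue S lam /\ forall a : R, eigenvalue S a -> lam <= a.

(* An action A in {0,1}^K is represented by its support {k | (A)_k = 1};
   (A)_k = (k \in A)%:R.  The action set is {A : #|A| <= m}. *)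
Definition inAct (K m : nat) (a : {set 'I_K}) : bool := (#|a| <= m)%N.

Definition in_convA (K m : nat) (a : 'I_K -> R) : Prop :=
  exists w : {set 'I_K} -> R,
    [/\ forall S, 0 <= w S, forall S, ~~ inAct m S -> w S = 0,
        \sum_S w S = 1 & forall k, a k = \sum_S w S * (k \in S)%:R].

Definition xlnx (y : R) : R := if y == 0 then 0 else y * ln y.
Definition entropy (K : nat) (a : 'I_K -> R) : R := - \sum_k xlnx (a k).

Definition c1 (K m d T : nat) (lam : R) : R :=
  Num.sqrt ((d%:R + ln T%:R / lam) * K%:R * ln T%:R
            / (m%:R * ln (K%:R / m%:R))).
Definition c2 (K : nat) (lam : R) : R := 8 * K%:R / lam.

(* betap_aux c cst Hs n = beta'_{n+1}, where Hs s = H(Abar_s(X_s)) and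
   cst = m ln(K/m):
   beta'_1 = c,  beta'_{s+1} = beta'_s + c (1 + cst^-1 sum_{r=1}^s Hs r)^{-1/2} *)
Fixpoint betap_aux (c cst : R) (Hs : nat -> R) (n : nat) : R :=
  match n with
  | 0 => c
  | n'.+1 => betap_aux c cst Hs n'
             + c / Num.sqrt (1 + cst^-1 * \sum_(1 <= r < n'.+2) Hs r)
  end.

Definition betap (K m d T : nat) (lam : R) (Hs : nat -> R) (t : nat) : R :=
  betap_aux (c1 K m d T lam) (m%:R * ln (K%:R / m%:R)) Hs t.-1.

Definition betaT (K m d T : nat) (lam : R) (Hs : nat -> R) (t : nat) : R :=
  Num.max 2 (Num.max (c2 K lam * ln T%:R) (betap K m d T lam Hs t)).

Definition etaT (K m d T : nat) (lam : R) (Hs : nat -> R) (t : nat) : R :=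
  (betaT K m d T lam Hs t)^-1.

Definition alphaT (K : nat) (lam : R) (t : nat) : R := 4 * K%:R * ln t%:R / lam.

Definition gammaT (K m d T : nat) (lam : R) (Hs : nat -> R) (t : nat) : R :=
  alphaT K lam t * etaT K m d T lam Hs t.

Definition Msamp (K m d T : nat) (lam : R) (Hs : nat -> R) (t : nat) : nat :=
  `|Num.ceil ((etaT K m d T lam Hs t)^-1)|%N.

(* pi(a|x) = (1-gam) p(a|x) + gam 1[a in E]/K ; E = singletons *)
Definition mixpol (K : nat) (gam : R) (d : nat)
    (p : d.-tuple R -> {set 'I_K} -> R) (x : d.-tuple R) (a : {set 'I_K}) : R :=
  (1 - gam) * p x a + gam * ((#|a| == 1%N)%:R / K%:R).

Definition Epol (K m d : nat) (D : probability (d.-tuple R) R)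
    (pol : d.-tuple R -> {set 'I_K} -> R)
    (f : d.-tuple R -> {set 'I_K} -> R) : R :=
  Rintegral D setT (fun x => \sum_(a | inAct m a) pol x a * f x a).

(* expectation over n independent fresh pairs (X(1),A(1)),...,(X(n),A(n)),
   X(j) ~ D i.i.d., A(j) ~ pol(.|X(j)); the list passed to g is
   [:: (X(1),A(1)); ...; (X(n),A(n))]. *)
Fixpoint Eiter (K m d : nat) (D : probability (d.-tuple R) R)
    (pol : d.-tuple R -> {set 'I_K} -> R) (n : nat)
    (g : seq (d.-tuple R * {set 'I_K}) -> R) : R :=
  match n with
  | 0 => g [::]
  | n'.+1 => Epol m D pol (fun x a =>
               Eiter m D pol n' (fun l => g ((x, a) :: l)))
  end.

Definition linloss (K d : nat) (theta : 'I_K -> 'cV[R]_d)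
    (x : d.-tuple R) (k : 'I_K) : R := dotv (colv x) (theta k).

Definition Cprod (K d : nat) (l : seq (d.-tuple R * {set 'I_K})) (k : 'I_K)
  : 'M[R]_d :=
  foldr (fun (p : d.-tuple R * {set 'I_K}) (acc : 'M[R]_d) =>
           (1%:M - ((k \in p.2)%:R / 2) *: (colv p.1 *m (colv p.1)^T)) *m acc)
        1%:M l.

Definition SigPlus (K d M : nat) (l : seq (d.-tuple R * {set 'I_K})) (k : 'I_K)
  : 'M[R]_d :=
  2^-1 *: (1%:M + \sum_(1 <= n < M.+1) Cprod (take n l) k).

Definition thetaTilde (K d M : nat) (loss : d.-tuple R -> 'I_K -> R)
    (l : seq (d.-tuple R * {set 'I_K})) (k : 'I_K)
    (x0 : d.-tuple R) (a0 : {set 'I_K}) : 'cV[R]_d :=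
  (loss x0 k * (k \in a0)%:R) *: (SigPlus M l k *m colv x0).

Definition SigmaTK (K m d : nat) (D : probability (d.-tuple R) R)
    (pol : d.-tuple R -> {set 'I_K} -> R) (k : 'I_K) : 'M[R]_d :=
  \matrix_(i, j) Epol m D pol (fun x a => (k \in a)%:R * (tnth x i * tnth x j)).

Definition thetaHat (K m d : nat) (D : probability (d.-tuple R) R)
    (pol : d.-tuple R -> {set 'I_K} -> R) (loss : d.-tuple R -> 'I_K -> R)
    (k : 'I_K) (x0 : d.-tuple R) (a0 : {set 'I_K}) : 'cV[R]_d :=
  (loss x0 k * (k \in a0)%:R) *: (invmx (SigmaTK m D pol k) *m colv x0).

Definition SigmaD (d : nat) (D : probability (d.-tuple R) R) : 'M[R]_d :=
  \matrix_(i, j) Rintegral D setT (fun x => tnth x i * tnth x j).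

Definition ftrl_obj (K d : nat) (tht : nat -> 'I_K -> 'cV[R]_d) (t : nat)
    (et : R) (x : 'cV[R]_d) (a : 'I_K -> R) : R :=
  \sum_(1 <= s < t) \sum_k dotv x (tht s k) * a k - entropy a / et.

End Bandit.

(* The estimator is biased only through the truncation of a Neumann series.
   Write S_k = Sigma_{t,k} and B_k = I - S_k/2. The fresh samples are
   independent, so E[C_{n,k}] = B_k^n and E[hat Sigma^+_{t,k}] is
   (1/2) sum_{n <= M} B_k^n; since (1/2) S_k = I - B_k the geometric sum
   telescopes and the bias of arm k is <x, B_k^(M+1) theta_k>. Every arm is
   explored with probability at least gamma_t/K, so
   S_k >= (gamma_t/K) Sigma >= (gamma_t/K) lambda_min I, hence
   0 <= B_k <= (1 - 2 ln t / beta_t) I, and as M_t >= beta_t,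
   |<x, B_k^(M+1) theta_k>| <= exp(-2 ln t) = 1/t^2. Summing over the at most
   m arms of A gives m/t^2. In round 1 there is no exploration and S_k may be
   singular; the bias is then still at most 1 = 1/t^2. *)

From HB Require Import structures.
From mathcomp Require Import all_boot all_order all_algebra.
From mathcomp Require Import all_classical all_reals all_analysis.
From mathcomp Require Import measurable_realfun ring lra.
Set Implicit Arguments. Unset Strict Implicit. Unset Printing Implicit Defensive.
Import Order.TTheory GRing.Theory Num.Theory.
Local Open Scope ring_scope.
Local Open Scope classical_set_scope.

Section InnerProduct.
Variables (R : realType) (d : nat).
Implicit Types (u v w : 'cV[R]_d) (A : 'M[R]_d).

Lemma dotvE u v : dotv u v = (u^T *m v) 0 0.
Proof. by rewrite /dotv mxE; apply: eq_bigr => i _; rewrite mxE. Qed.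

Lemma dotvC u v : dotv u v = dotv v u.
Proof. by apply: eq_bigr => i _; rewrite mulrC. Qed.

Lemma dotvDr u v w : dotv u (v + w) = dotv u v + dotv u w.
Proof. by rewrite /dotv -big_split; apply: eq_bigr => i _; rewrite mxE mulrDr. Qed.

Lemma dotvZr u v (c : R) : dotv u (c *: v) = c * dotv u v.
Proof. by rewrite /dotv mulr_sumr; apply: eq_bigr => i _; rewrite mxE mulrCA. Qed.

Lemma dotvBr u v w : dotv u (v - w) = dotv u v - dotv u w.
Proof. by rewrite -scaleN1r dotvDr dotvZr mulN1r. Qed.

Lemma dotv0r u : dotv u 0 = 0.
Proof. by rewrite -(scale0r 0) dotvZr mul0r. Qed.

Lemma dotvDl u v w : dotv (v + w) u = dotv v u + dotv w u.
Proof. by rewrite dotvC dotvDr !(dotvC u). Qed.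

Lemma dotvZl u v (c : R) : dotv (c *: v) u = c * dotv v u.
Proof. by rewrite dotvC dotvZr dotvC. Qed.

Lemma dotvBl u v w : dotv (v - w) u = dotv v u - dotv w u.
Proof. by rewrite dotvC dotvBr !(dotvC u). Qed.

Lemma dotv_sumr (I : Type) (r : seq I) (P : pred I) (F : I -> 'cV[R]_d) u :
  dotv u (\sum_(i <- r | P i) F i) = \sum_(i <- r | P i) dotv u (F i).
Proof. by elim/big_rec2: _ => [|i y1 y2 _ <-]; rewrite ?dotv0r ?dotvDr. Qed.

Lemma dotv_mulmxr u A v : dotv u (A *m v) = dotv (A^T *m u) v.
Proof. by rewrite !dotvE trmx_mul trmxK mulmxA. Qed.

Lemma coord_sqr_le_dotv v i : v i 0 ^+ 2 <= dotv v v.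
Proof.
rewrite /dotv (bigD1 i) //= -expr2 lerDl sumr_ge0 // => j _.
by rewrite -expr2 sqr_ge0.
Qed.

Lemma dotvv_ge0 v : 0 <= dotv v v.
Proof. by rewrite sumr_ge0 // => i _; rewrite -expr2 sqr_ge0. Qed.

Lemma dotvv_eq0 v : (dotv v v == 0) = (v == 0).
Proof.
apply/eqP/eqP => [v0|->]; last exact: dotv0r.
apply/matrixP => i j; rewrite [j]ord1 mxE; apply/eqP; rewrite -sqrf_eq0.
by rewrite eq_le sqr_ge0 andbT -v0 coord_sqr_le_dotv.
Qed.

Lemma norm2_le1 v : norm2 v <= 1 -> dotv v v <= 1.
Proof.
move=> v1; rewrite -(sqr_sqrtr (dotvv_ge0 v)) -(expr1n _ 2).
by rewrite ler_pXn2r // nnegrE // sqrtr_ge0.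
Qed.

Lemma outer_mulmx v w : v *m v^T *m w = dotv v w *: v.
Proof.
apply/matrixP => i j; rewrite !mxE /dotv mulr_suml; apply: eq_bigr => k _.
by rewrite !mxE big_ord1 !mxE [j]ord1; ring.
Qed.

End InnerProduct.

Section QuadraticForm.
Variables (R : realType) (d : nat).
Implicit Types (u v w : 'cV[R]_d) (A Z : 'M[R]_d).

Definition qform A v := dotv v (A *m v).

Lemma qform1 v : qform 1%:M v = dotv v v.
Proof. by rewrite /qform mul1mx. Qed.

Lemma qformZ A (c : R) v : qform A (c *: v) = c ^+ 2 * qform A v.
Proof. by rewrite /qform -scalemxAr dotvZl dotvZr mulrA -expr2. Qed.

Lemma qformZl (c : R) A v : qform (c *: A) v = c * qform A v.
Proof. by rewrite /qform -scalemxAl dotvZr. Qed.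

Lemma dotv_sym u A v : A^T = A -> dotv (A *m u) v = dotv u (A *m v).
Proof. by move=> sA; rewrite dotv_mulmxr sA. Qed.

Lemma qformDZ A u w (s : R) : A^T = A ->
  qform A (u + s *: w) = qform A u + 2 * s * dotv u (A *m w) + s ^+ 2 * qform A w.
Proof.
move=> sA; rewrite /qform mulmxDr -scalemxAr dotvDl !dotvDr !dotvZl !dotvZr.
by rewrite [dotv w (A *m u)]dotvC dotv_sym //; ring.
Qed.

Lemma psd_cauchy_schwarz A u w : A^T = A -> (forall v, 0 <= qform A v) ->
  dotv u (A *m w) ^+ 2 <= qform A u * qform A w.
Proof.
move=> sA psdA; set b := dotv u (A *m w).
have line s : 0 <= qform A u + 2 * s * b + s ^+ 2 * qform A w by rewrite -qformDZ.
have [qw0|qw_neq0] := eqVneq (qform A w) 0.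
  have [->|b_neq0] := eqVneq b 0; first by rewrite expr0n /= qw0 mulr0.
  have := line (- (qform A u + 1) / (2 * b)).
  have -> : 2 * (- (qform A u + 1) / (2 * b)) * b = - (qform A u + 1) by field.
  rewrite qw0 mulr0; lra.
have qw_gt0 : 0 < qform A w by rewrite lt_def qw_neq0 psdA.
have := line (- b / qform A w).
have -> : qform A u + 2 * (- b / qform A w) * b + (- b / qform A w) ^+ 2 * qform A w
   = qform A u - b ^+ 2 / qform A w by field; rewrite gt_eqF.
by rewrite subr_ge0 ler_pdivrMr.
Qed.

Lemma cauchy_schwarz u v : dotv u v ^+ 2 <= dotv u u * dotv v v.
Proof.
have psd1 w : 0 <= qform 1%:M w by rewrite qform1 dotvv_ge0.
by have := psd_cauchy_schwarz u v (trmx1 _ _) psd1; rewrite !qform1 mul1mx.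
Qed.

(* Cauchy-Schwarz for the semi-inner product [dotv _ (A *m _)]. *)
Lemma psd_mulmx_le A w (rho : R) : A^T = A -> 0 <= rho ->
  (forall v, 0 <= qform A v) -> (forall v, qform A v <= rho * dotv v v) ->
  dotv (A *m w) (A *m w) <= rho ^+ 2 * dotv w w.
Proof.
move=> sA rho_ge0 psdA A_le; set y := A *m w.
have yy_ge0 := dotvv_ge0 y.
have : dotv y y ^+ 2 <= (rho * dotv y y) * (rho * dotv w w).
  by apply: le_trans (psd_cauchy_schwarz y w sA psdA) _; apply: ler_pM.
have [->|yy_neq0] := eqVneq (dotv y y) 0; first by rewrite mulr_ge0 ?sqr_ge0 ?dotvv_ge0.
have yy_gt0 : 0 < dotv y y by rewrite lt_def yy_neq0.
by rewrite mulrACA -expr2 mulrCA [dotv y y ^+ 2]expr2 ler_pM2l.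
Qed.

Lemma trmxX A n : A^T = A -> (A ^+ n)^T = A ^+ n.
Proof.
move=> sA; elim: n => [|n IH]; first exact: trmx1.
by rewrite [in LHS]exprS trmx_mul IH sA exprSr.
Qed.

Lemma qform_exprn_bound A (rho : R) : A^T = A -> 0 <= rho ->
  (forall v, 0 <= qform A v) -> (forall v, qform A v <= rho * dotv v v) ->
  forall n v, 0 <= qform (A ^+ n) v <= rho ^+ n * dotv v v.
Proof.
move=> sA rho_ge0 psdA A_le.
suff H n : (forall v, 0 <= qform (A ^+ n) v <= rho ^+ n * dotv v v) /\
           (forall v, 0 <= qform (A ^+ n.+1) v <= rho ^+ n.+1 * dotv v v).
  by move=> n; case: (H n).
elim: n => [|n [IH IHS]].
  by split=> v; rewrite ?expr0 ?expr1 ?mul1r ?qform1 ?lexx ?dotvv_ge0 ?psdA ?A_le.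
split=> [//|v].
have -> : qform (A ^+ n.+2) v = qform (A ^+ n) (A *m v).
  by rewrite /qform exprS exprSr -!mulmxA -dotv_sym.
have /andP[-> le_n] := IH (A *m v); apply: le_trans le_n _.
by rewrite -addn2 exprD -mulrA ler_wpM2l ?exprn_ge0 ?psd_mulmx_le.
Qed.

Lemma qform_polarization Z u w : Z^T = Z ->
  qform Z (u + w) - qform Z (u - w) = 4 * dotv u (Z *m w).
Proof.
move=> sZ; rewrite /qform mulmxDr mulmxBr dotvDl dotvBl !dotvBr !dotvDr.
by rewrite [dotv w (Z *m u)]dotvC dotv_sym //; ring.
Qed.

(* Polarization, then the parallelogram law. *)
Lemma sym_bilinear_le Z (c : R) u w : Z^T = Z -> 0 <= c ->
  (forall v, `|qform Z v| <= c * dotv v v) -> dotv u u <= 1 -> dotv w w <= 1 ->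
  `|dotv u (Z *m w)| <= c.
Proof.
move=> sZ c_ge0 Z_le u1 w1.
have parallelogram : dotv (u + w) (u + w) + dotv (u - w) (u - w) <= 4.
  rewrite dotvDl dotvBl !dotvBr !dotvDr [dotv w u]dotvC; lra.
suff : `|4 * dotv u (Z *m w)| <= 4 * c by rewrite normrM ger0_norm // ler_pM2l.
rewrite -qform_polarization //; apply: le_trans (ler_normB _ _) _.
by apply: le_trans (lerD (Z_le _) (Z_le _)) _; rewrite -mulrDr mulrC ler_wpM2r.
Qed.

End QuadraticForm.

Section MinEigenvalue.
Variables (R : realType) (d : nat).
Implicit Types (u v : 'cV[R]_d) (A P : 'M[R]_d).

Lemma posdef_qformE A v : (v^T *m A *m v) 0 0 = qform A v.
Proof. by rewrite /qform dotvE mulmxA. Qed.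

Lemma posdef_qform_ge0 A v : posdef A -> 0 <= qform A v.
Proof.
case=> _ posA; have [->|v_neq0] := eqVneq v 0; first by rewrite /qform mulmx0 dotv0r.
by rewrite -posdef_qformE ltW ?posA.
Qed.

Lemma posdef_eigenvalue_gt0 A a : posdef A -> eigenvalue A a -> 0 < a.
Proof.
move=> [sA posA] /eigenvalueP[w wA w_neq0].
have u_neq0 : w^T != 0 by rewrite -(inj_eq (@trmx_inj _ _ _)) trmxK trmx0.
have Au : A *m w^T = a *: w^T by rewrite -{1}sA -trmx_mul wA linearZ.
have := posA _ u_neq0; rewrite posdef_qformE /qform Au dotvZr.
by rewrite pmulr_lgt0 // lt_def dotvv_ge0 dotvv_eq0 u_neq0.
Qed.

Lemma posdef_unitmx A : posdef A -> A \in unitmx.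
Proof.
move=> posA; apply: contraT => A_singular.
have : eigenvalue A 0.
  rewrite /eigenvalue /eigenspace (_ : 0%:M = 0); last by apply/matrixP => i j; rewrite !mxE mul0rn.
  by rewrite subr0 kermx_eq0 row_free_unit.
by move/(posdef_eigenvalue_gt0 posA); rewrite ltxx.
Qed.

Lemma coord_mul_le_dotv v i j : `|v i 0 * v j 0| <= dotv v v.
Proof.
rewrite -(ler_pXn2r (n := 2)) ?nnegrE ?dotvv_ge0 //.
rewrite -normrX ger0_norm ?sqr_ge0 // exprMn [_ ^+ 2 in X in _ <= X]expr2.
by apply: ler_pM; rewrite ?sqr_ge0 ?coord_sqr_le_dotv.
Qed.

Lemma qform_le_entry_sum A v : `|qform A v| <= (\sum_i \sum_j `|A i j|) * dotv v v.
Proof.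
rewrite /qform {1}/dotv mulr_suml; apply: le_trans (ler_norm_sum _ _ _) _.
apply: ler_sum => i _; rewrite mxE mulr_sumr mulr_suml.
apply: le_trans (ler_norm_sum _ _ _) _; apply: ler_sum => j _.
by rewrite mulrCA normrM mulrC [X in _ <= X]mulrC ler_wpM2r ?coord_mul_le_dotv.
Qed.

(* Cauchy-Schwarz for [P] against [invmx P]: |u|^4 <= qform P u * qform (invmx P) u. *)
Lemma psd_unitmx_coercive P : P^T = P -> (forall v, 0 <= qform P v) ->
  P \in unitmx -> exists2 c : R, 0 < c & forall v, c * dotv v v <= qform P v.
Proof.
move=> sP psdP unitP; set C := \sum_i \sum_j `|invmx P i j|.
have C_ge0 : 0 <= C by apply: sumr_ge0 => i _; exact: sumr_ge0.
exists (C + 1)^-1; first by rewrite invr_gt0 ltr_wpDl.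
move=> v.
have key : dotv v v ^+ 2 <= qform P v * (C * dotv v v).
  have {1}-> : dotv v v = dotv v (P *m (invmx P *m v)) by rewrite mulKVmx.
  apply: le_trans (psd_cauchy_schwarz _ _ sP psdP) _; rewrite ler_wpM2l //.
  have -> : qform P (invmx P *m v) = qform (invmx P) v by rewrite /qform mulKVmx // dotvC.
  exact: le_trans (ler_norm _) (qform_le_entry_sum _ _).
have [->|vv_neq0] := eqVneq (dotv v v) 0; first by rewrite mulr0.
have vv_gt0 : 0 < dotv v v by rewrite lt_def vv_neq0 dotvv_ge0.
rewrite mulrA expr2 ler_pM2r // in key.
rewrite ler_pdivrMl ?ltr_wpDl //; apply: le_trans key _.
by rewrite mulrC ler_wpM2r ?psdP ?lerDl.
Qed.

Lemma exists_unit_vector : (0 < d)%N -> exists v : 'cV[R]_d, dotv v v = 1.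
Proof.
move=> d_gt0; pose i0 := Ordinal d_gt0.
exists (\col_i (i == i0)%:R); rewrite /dotv (bigD1 i0) //= big1 ?addr0.
  by rewrite !mxE eqxx mulr1.
by move=> j /negbTE j_neq0; rewrite !mxE j_neq0 mulr0.
Qed.

(* The infimum [mu] of the Rayleigh quotient is an eigenvalue: otherwise
   [A - mu] would be invertible, hence coercive, and the infimum would be
   larger. *)
Lemma rayleigh_lambda_min A lam v : (0 < d)%N -> posdef A ->
  is_lambda_min A lam -> lam * dotv v v <= qform A v.
Proof.
move=> d_gt0 posA [_ lam_min].
pose sphere := [set qform A u | u in [set u | dotv u u = 1]].
pose mu := inf sphere.
have sphere_ne : sphere !=set0.
  by have [u u1] := exists_unit_vector d_gt0; exists (qform A u), u.
have sphere_lb : has_lbound sphere.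
  by exists 0 => _ [u _ <-]; exact: posdef_qform_ge0.
have mu_le u : mu * dotv u u <= qform A u.
  have [->|uu_neq0] := eqVneq (dotv u u) 0; first by rewrite mulr0 posdef_qform_ge0.
  have uu_gt0 : 0 < dotv u u by rewrite lt_def uu_neq0 dotvv_ge0.
  set s := Num.sqrt (dotv u u).
  have s_neq0 : s != 0 by rewrite gt_eqF ?sqrtr_gt0.
  have s2 : s ^+ 2 = dotv u u by rewrite sqr_sqrtr // dotvv_ge0.
  have : mu <= qform A (s^-1 *: u).
    apply: ge_inf => //; exists (s^-1 *: u) => //=.
    by rewrite -qform1 qformZ qform1 exprVn s2 mulVf.
  by rewrite qformZ exprVn s2 ler_pdivlMl // mulrC.
set P := A - mu%:M.
have qformP w : qform P w = qform A w - mu * dotv w w.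
  by rewrite /qform mulmxBl dotvBr mul_scalar_mx dotvZr.
have sP : P^T = P by rewrite /P linearB /= posA.1 tr_scalar_mx.
have psdP w : 0 <= qform P w by rewrite qformP subr_ge0.
have eig_mu : eigenvalue A mu.
  rewrite /eigenvalue /eigenspace kermx_eq0 row_free_unit -/P.
  apply/negP => /(psd_unitmx_coercive sP psdP)[c c_gt0 P_ge].
  suff : mu + c <= mu by lra.
  apply: lb_le_inf sphere_ne _ => _ [w /= w1 <-].
  by have := P_ge w; rewrite qformP w1 !mulr1; lra.
by apply: le_trans (mu_le v); rewrite ler_wpM2r ?dotvv_ge0 ?lam_min.
Qed.

End MinEigenvalue.

Section ProbabilityIntegral.
Variables (R : realType) (d : nat) (D : probability (d.-tuple R) R).
Local Notation integrable f := (D.-integrable setT (EFin \o f)).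
Local Notation Rint f := (Rintegral D setT f).
Implicit Types f g : d.-tuple R -> R.

Lemma integrable_ae_bounded f (c : R) : measurable_fun setT f ->
  {ae D, forall x, `|f x| <= c} -> integrable f.
Proof.
move=> mf f_le; apply/integrableP; split; first exact/measurable_EFinP.
have f_le' : {ae D, forall x, setT x -> (`|(EFin \o f) x| <= (Num.max c 0)%:E)%E}.
  by apply: filterS f_le => x fx _ /=; rewrite lee_fin le_max fx.
apply: le_lt_trans (integral_le_bound _ measurableT _ _ f_le') _.
- exact/measurable_EFinP.
- by rewrite lee_fin le_max lexx orbT.
- by rewrite [X in (_ * X)%E]probability_setT mule1 ltry.
Qed.

Lemma integrableD_fun f g : integrable f -> integrable g -> integrable (fun x => f x + g x).
Proof. by move=> fi gi; apply: eq_integrable (integrableD measurableT fi gi) => //. Qed.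

Lemma integrableZl_fun (c : R) f : integrable f -> integrable (fun x => c * f x).
Proof. by move=> fi; apply: eq_integrable (integrableZl measurableT c fi) => //. Qed.

Lemma integrable_sum_fun (I : Type) (r : seq I) (f : I -> d.-tuple R -> R) :
  (forall i, integrable (f i)) -> integrable (fun x => \sum_(i <- r) f i x).
Proof.
move=> fi; elim: r => [|i r IH].
  by under eq_fun do rewrite big_nil; exact: finite_measure_integrable_cst.
by under eq_fun do rewrite big_cons; exact: integrableD_fun.
Qed.

Lemma Rintegral_cst_prob (c : R) : Rint (fun=> c) = c.
Proof.
by rewrite Rintegral_cst // [fine _](_ : _ = 1) ?mulr1 // [X in fine X]probability_setT.
Qed.

Lemma Rintegral_sum (I : Type) (r : seq I) (f : I -> d.-tuple R -> R) :
  (forall i, integrable (f i)) ->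
  Rint (fun x => \sum_(i <- r) f i x) = \sum_(i <- r) Rint (f i).
Proof.
move=> fi; elim: r => [|i r IH].
  by under eq_fun do rewrite big_nil; rewrite big_nil Rintegral_cst_prob.
under eq_fun do rewrite big_cons.
by rewrite RintegralD ?big_cons ?IH //; exact: integrable_sum_fun.
Qed.

Lemma Rintegral_ae_le_cst f (c : R) : measurable_fun setT f -> integrable f ->
  (forall x, 0 <= f x) -> 0 <= c -> {ae D, forall x, f x <= c} -> Rint f <= c.
Proof.
move=> mf fi f_ge0 c_ge0 f_le; rewrite -[leRHS]Rintegral_cst_prob.
apply: fine_le; rewrite ?integrable_fin_num //; first exact: finite_measure_integrable_cst.
apply: ae_ge0_le_integral => //.
- by move=> x _; rewrite lee_fin.
- exact/measurable_EFinP.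
- by apply: filterS f_le => x fx _; rewrite lee_fin.
Qed.

End ProbabilityIntegral.

Section WeightedCovariance.
Variables (R : realType) (d : nat) (D : probability (d.-tuple R) R).
Hypothesis HDnorm : {ae D, forall x : d.-tuple R, norm2 (colv x) <= 1}.
Local Notation integrable f := (D.-integrable setT (EFin \o f)).
Local Notation Rint f := (Rintegral D setT f).

Definition weighted_cov (wt : d.-tuple R -> R) : 'M[R]_d :=
  \matrix_(i, j) Rint (fun x => wt x * (tnth x i * tnth x j)).

Lemma trmx_weighted_cov wt : (weighted_cov wt)^T = weighted_cov wt.
Proof.
apply/matrixP => i j; rewrite !mxE; apply: eq_Rintegral => x _.
by rewrite [tnth x j * _]mulrC.
Qed.

Lemma tnth_norm_le1 (x : d.-tuple R) i : norm2 (colv x) <= 1 -> `|tnth x i| <= 1.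
Proof.
move=> /norm2_le1 /(le_trans (coord_sqr_le_dotv _ i)).
by rewrite mxE -real_normK ?num_real // expr_le1.
Qed.

Lemma measurable_dotv_colv (u : 'cV[R]_d) :
  measurable_fun setT (fun x : d.-tuple R => dotv u (colv x)).
Proof.
rewrite (_ : (fun x => _) = fun x => \sum_(i <- index_enum 'I_d) u i 0 * tnth x i).
  by apply: measurable_sum => i; apply: measurable_funM => //; exact: measurable_tnth.
by apply/funext => x; apply: eq_bigr => i _; rewrite mxE.
Qed.

Section Weight.
Variable wt : d.-tuple R -> R.
Hypothesis wt_meas : measurable_fun setT wt.
Hypothesis wt_ge0 : forall x, 0 <= wt x.
Hypothesis wt_le1 : forall x, wt x <= 1.

Lemma integrable_weighted_entry i j :
  integrable (fun x => wt x * (tnth x i * tnth x j)).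
Proof.
apply: (@integrable_ae_bounded _ _ _ _ 1).
  by apply: measurable_funM => //; apply: measurable_funM; exact: measurable_tnth.
apply: filterS HDnorm => x x1; rewrite !normrM -[1]mulr1 ler_pM //.
  by rewrite ger0_norm.
by rewrite -[1]mulr1 ler_pM // tnth_norm_le1.
Qed.

Lemma weighted_quad_expand u w x :
  wt x * (dotv u (colv x) * dotv (colv x) w) =
  \sum_i \sum_j u i 0 * w j 0 * (wt x * (tnth x i * tnth x j)).
Proof.
rewrite /dotv mulr_suml mulr_sumr; apply: eq_bigr => i _.
rewrite !mulr_sumr; apply: eq_bigr => j _; rewrite !mxE; ring.
Qed.

Lemma integrable_weighted_quad u w :
  integrable (fun x => wt x * (dotv u (colv x) * dotv (colv x) w)).
Proof.
under eq_fun do rewrite weighted_quad_expand.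
do 2![apply: integrable_sum_fun => ?]; apply: integrableZl_fun.
exact: integrable_weighted_entry.
Qed.

Lemma Rintegral_weighted_quad u w :
  Rint (fun x => wt x * (dotv u (colv x) * dotv (colv x) w)) =
  dotv u (weighted_cov wt *m w).
Proof.
under eq_fun do rewrite weighted_quad_expand.
rewrite Rintegral_sum => [|i]; last first.
  by apply: integrable_sum_fun => j; apply: integrableZl_fun; exact: integrable_weighted_entry.
apply: eq_bigr => i _; rewrite Rintegral_sum => [|j]; last first.
  by apply: integrableZl_fun; exact: integrable_weighted_entry.
rewrite !mxE big_distrr; apply: eq_bigr => j _ /=.
by rewrite RintegralZl ?integrable_weighted_entry // /weighted_cov mxE; ring.
Qed.

Lemma qform_weighted_cov v :
  qform (weighted_cov wt) v = Rint (fun x => wt x * dotv v (colv x) ^+ 2).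
Proof.
rewrite /qform -Rintegral_weighted_quad; apply: eq_Rintegral => x _.
by rewrite [dotv (colv x) v]dotvC.
Qed.

Lemma qform_weighted_cov_ge0 v : 0 <= qform (weighted_cov wt) v.
Proof. by rewrite qform_weighted_cov Rintegral_ge0 // => x _; rewrite mulr_ge0 ?sqr_ge0. Qed.

Lemma qform_weighted_cov_le v : qform (weighted_cov wt) v <= dotv v v.
Proof.
rewrite qform_weighted_cov; apply: Rintegral_ae_le_cst; rewrite ?dotvv_ge0 //.
- by apply: measurable_funM => //; apply: measurable_funX; exact: measurable_dotv_colv.
- under eq_fun do rewrite expr2 {2}dotvC.
  exact: integrable_weighted_quad.
- by move=> x; rewrite mulr_ge0 ?sqr_ge0.
apply: filterS HDnorm => x /norm2_le1 x1.
apply: le_trans (ler_wpM2r (sqr_ge0 _) (wt_le1 x)) _; rewrite mul1r.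
apply: le_trans (cauchy_schwarz _ _) _.
by rewrite ler_piMr ?dotvv_ge0.
Qed.

End Weight.

Lemma qform_weighted_cov_le_mono (wt1 wt2 : d.-tuple R -> R) v :
  measurable_fun setT wt1 -> measurable_fun setT wt2 ->
  (forall x, 0 <= wt1 x) -> (forall x, wt2 x <= 1) -> (forall x, wt1 x <= wt2 x) ->
  qform (weighted_cov wt1) v <= qform (weighted_cov wt2) v.
Proof.
move=> m1 m2 wt1_ge0 wt2_le1 wt12.
have wt1_le1 x : wt1 x <= 1 by apply: le_trans (wt12 x) _.
have wt2_ge0 x : 0 <= wt2 x by apply: le_trans (wt12 x).
rewrite (qform_weighted_cov m1 wt1_ge0 wt1_le1) (qform_weighted_cov m2 wt2_ge0 wt2_le1).
apply: le_Rintegral => //.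
- under eq_fun do rewrite expr2 {2}dotvC.
  exact: integrable_weighted_quad.
- under eq_fun do rewrite expr2 {2}dotvC.
  exact: integrable_weighted_quad.
by move=> x _; rewrite ler_wpM2r ?sqr_ge0.
Qed.

End WeightedCovariance.

Lemma weighted_cov_cst (R : realType) (d : nat) (D : probability (d.-tuple R) R) (c : R) :
  {ae D, forall x : d.-tuple R, norm2 (colv x) <= 1} ->
  weighted_cov D (fun=> c) = c *: SigmaD D.
Proof.
move=> HDnorm; apply/matrixP => i j; rewrite !mxE -RintegralZl //.
have := integrable_weighted_entry HDnorm (measurable_cst (1 : R)) (fun=> ler01) (fun=> lexx 1) i j.
by apply: eq_integrable => // x _ /=; rewrite mul1r.
Qed.

Section PolicyCovariance.
Variables (R : realType) (d : nat) (D : probability (d.-tuple R) R).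
Hypothesis HDnorm : {ae D, forall x : d.-tuple R, norm2 (colv x) <= 1}.
Variables (K m : nat) (pol : d.-tuple R -> {set 'I_K} -> R).
Hypothesis pol_meas : forall a, measurable_fun setT (fun x => pol x a).
Hypothesis pol_ge0 : forall x a, 0 <= pol x a.
Hypothesis pol_sum1 : forall x, \sum_(a | inAct m a) pol x a = 1.
Local Notation integrable f := (D.-integrable setT (EFin \o f)).

Definition play_prob (k : 'I_K) (x : d.-tuple R) : R :=
  \sum_(a | inAct m a) pol x a * (k \in a)%:R.

Lemma play_prob_ge0 k x : 0 <= play_prob k x.
Proof. by apply: sumr_ge0 => a _; rewrite mulr_ge0. Qed.

Lemma play_prob_le1 k x : play_prob k x <= 1.
Proof.
rewrite -(pol_sum1 x); apply: ler_sum => a _.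
by rewrite ler_piMr // lern1 leq_b1.
Qed.

Lemma measurable_play_prob k : measurable_fun setT (play_prob k).
Proof.
have -> : play_prob k = fun x => \sum_(a <- index_enum _)
    if inAct m a then pol x a * (k \in a)%:R else 0.
  by apply/funext => x; exact: big_mkcond.
apply: measurable_sum => a; case: (inAct m a); last exact: measurable_cst.
exact: measurable_funM.
Qed.

Local Hint Resolve measurable_play_prob play_prob_ge0 play_prob_le1 : core.

Lemma SigmaTK_weighted k : SigmaTK m D pol k = weighted_cov D (play_prob k).
Proof.
apply/matrixP => i j; rewrite !mxE /Epol; apply: eq_Rintegral => x _.
by rewrite /play_prob mulr_suml; apply: eq_bigr => a _; rewrite mulrA.
Qed.

Lemma trmx_SigmaTK k : (SigmaTK m D pol k)^T = SigmaTK m D pol k.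
Proof. by rewrite SigmaTK_weighted trmx_weighted_cov. Qed.

Lemma qform_SigmaTK_ge0 k v : 0 <= qform (SigmaTK m D pol k) v.
Proof. rewrite SigmaTK_weighted; exact: qform_weighted_cov_ge0. Qed.

Lemma qform_SigmaTK_le k v : qform (SigmaTK m D pol k) v <= dotv v v.
Proof. rewrite SigmaTK_weighted; exact: qform_weighted_cov_le. Qed.

Lemma qform_SigmaD_le_SigmaTK (g : R) k v : (0 < m)%N -> 0 <= g ->
  (forall x, g <= pol x [set k]%SET) ->
  g * qform (SigmaD D) v <= qform (SigmaTK m D pol k) v.
Proof.
move=> m_gt0 g_ge0 g_le.
have g_le_play x : g <= play_prob k x.
  apply: le_trans (g_le x) _; rewrite /play_prob (bigD1 [set k]%SET) /=; last first.
    by rewrite /inAct cards1.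
  by rewrite set11 mulr1 lerDl sumr_ge0 // => a _; rewrite mulr_ge0.
rewrite -qformZl -weighted_cov_cst // SigmaTK_weighted.
by apply: qform_weighted_cov_le_mono => //; exact: measurable_cst.
Qed.

Lemma Epol_quadratic (I : Type) (r : seq I) (c e : I -> R) (kk : I -> 'I_K)
    (u w : I -> 'cV[R]_d) :
  Epol m D pol (fun x a => \sum_(q <- r) (c q + (kk q \in a)%:R * e q *
      (dotv (u q) (colv x) * dotv (colv x) (w q))))
  = \sum_(q <- r) (c q + e q * dotv (u q) (SigmaTK m D pol (kk q) *m w q)).
Proof.
pose f q x := play_prob (kk q) x * (dotv (u q) (colv x) * dotv (colv x) (w q)).
have fi q : integrable (f q) by exact: integrable_weighted_quad.
rewrite /Epol (_ : (fun x => _) = fun x => \sum_(q <- r) (c q + e q * f q x)).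
  rewrite Rintegral_sum => [|q]; last first.
    by apply: integrableD_fun; [exact: finite_measure_integrable_cst | exact: integrableZl_fun].
  apply: eq_bigr => q _; rewrite RintegralD ?RintegralZl ?Rintegral_cst_prob //.
  - by rewrite SigmaTK_weighted Rintegral_weighted_quad.
  - exact: finite_measure_integrable_cst.
  - exact: integrableZl_fun.
apply/funext => x; under eq_bigr do rewrite mulr_sumr.
rewrite exchange_big /=; apply: eq_bigr => q _.
under eq_bigr do rewrite mulrDr.
rewrite big_split /= -mulr_suml pol_sum1 mul1r; congr (_ + _).
by rewrite /f /play_prob !mulr_suml mulr_sumr; apply: eq_bigr => a _; ring.
Qed.

End PolicyCovariance.

Section SampledProducts.
Variables (R : realType) (d : nat) (D : probability (d.-tuple R) R).
Hypothesis HDnorm : {ae D, forall x : d.-tuple R, norm2 (colv x) <= 1}.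
Variables (K m : nat) (pol : d.-tuple R -> {set 'I_K} -> R).
Hypothesis pol_meas : forall a, measurable_fun setT (fun x => pol x a).
Hypothesis pol_ge0 : forall x a, 0 <= pol x a.
Hypothesis pol_sum1 : forall x, \sum_(a | inAct m a) pol x a = 1.

(* The mean of one factor [I - (A)_k X X^T / 2] of [Cprod]. *)
Definition stepmx (k : 'I_K) : 'M[R]_d := 1%:M - 2^-1 *: SigmaTK m D pol k.

(* [CprodTerm k n u w] stands for [l |-> dotv u (Cprod (take n l) k *m w)]. *)
Record cprod_term := CprodTerm {
  ct_arm : 'I_K; ct_len : nat; ct_left : 'cV[R]_d; ct_right : 'cV[R]_d }.

Definition eval_term (q : cprod_term) (l : seq (d.-tuple R * {set 'I_K})) : R :=
  dotv (ct_left q) (Cprod (take (ct_len q) l) (ct_arm q) *m ct_right q).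

Definition mean_term (n : nat) (q : cprod_term) : R :=
  dotv (ct_left q) (stepmx (ct_arm q) ^+ minn (ct_len q) n *m ct_right q).

Lemma mean_termE n k j u w :
  mean_term n (CprodTerm k j u w) = dotv u (stepmx k ^+ minn j n *m w).
Proof. by []. Qed.

(* Peeling off the first sample [(x, a)] moves the first factor of the product
   into the left vector. *)
Definition shift_term (x : d.-tuple R) (a : {set 'I_K}) (q : cprod_term) :=
  CprodTerm (ct_arm q) (ct_len q).-1
    (ct_left q - ((0 < ct_len q)%N%:R * ((ct_arm q \in a)%:R / 2)
                  * dotv (colv x) (ct_left q)) *: colv x)
    (ct_right q).

Lemma eval_term_cons x a q l : eval_term q ((x, a) :: l) = eval_term (shift_term x a q) l.
Proof.
case: q => k [|n] u w; rewrite /eval_term /=.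
  by rewrite take0 !mul0r scale0r subr0.
rewrite !mulmxBl !mul1mx -!scalemxAl -(mulmxA (colv x *m _)) outer_mulmx.
by rewrite dotvBr dotvBl !dotvZr dotvZl [dotv u (colv x)]dotvC; ring.
Qed.

Lemma Eiter_sum_terms n (r : seq cprod_term) :
  Eiter m D pol n (fun l => \sum_(q <- r) eval_term q l) = \sum_(q <- r) mean_term n q.
Proof.
elim: n r => [|n IH] r /=; first by apply: eq_bigr => -[k j u w] _; rewrite /mean_term minn0.
pose Bw q := stepmx (ct_arm q) ^+ minn (ct_len q).-1 n *m ct_right q.
have -> : (fun x a => Eiter m D pol n (fun l => \sum_(q <- r) eval_term q ((x, a) :: l)))
  = fun x a => \sum_(q <- r) (dotv (ct_left q) (Bw q)
    + (ct_arm q \in a)%:R * (- ((0 < ct_len q)%N%:R / 2))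
      * (dotv (ct_left q) (colv x) * dotv (colv x) (Bw q))).
  apply/funext => x; apply/funext => a.
  have -> : (fun l => \sum_(q <- r) eval_term q ((x, a) :: l))
      = fun l => \sum_(q <- map (shift_term x a) r) eval_term q l.
    by apply/funext => l; rewrite big_map; apply: eq_bigr => q _; rewrite eval_term_cons.
  rewrite IH big_map; apply: eq_bigr => -[k j u w] _.
  by rewrite /mean_term /Bw /= dotvBl dotvZl [dotv (colv x) u]dotvC; ring.
rewrite Epol_quadratic //; apply: eq_bigr => -[k [|j] u w] _; rewrite /Bw /mean_term /=.
  by rewrite !min0n mul0r oppr0 mul0r addr0.
rewrite minnSS exprS -mulmxA {2}/stepmx mulmxBl mul1mx -scalemxAl dotvBr dotvZr; ring.
Qed.

End SampledProducts.

Lemma geometric_sum_mulr (T : pzRingType) (b : T) (N : nat) :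
  (\sum_(0 <= n < N) b ^+ n) * (1 - b) = 1 - b ^+ N.
Proof.
rewrite mulr_suml (telescope_sumr_eq (fun n => - b ^+ n)) //.
  by rewrite opprK expr0 addrC.
by move=> n _; rewrite mulrBr mulr1 -exprSr opprK addrC.
Qed.

Section Bias.
Variables (R : realType) (d : nat) (D : probability (d.-tuple R) R).
Hypothesis HDnorm : {ae D, forall x : d.-tuple R, norm2 (colv x) <= 1}.
Variables (K m : nat) (pol : d.-tuple R -> {set 'I_K} -> R).
Hypothesis pol_meas : forall a, measurable_fun setT (fun x => pol x a).
Hypothesis pol_ge0 : forall x a, 0 <= pol x a.
Hypothesis pol_sum1 : forall x, \sum_(a | inAct m a) pol x a = 1.
Variables (M : nat) (theta : 'I_K -> 'cV[R]_d) (x : 'cV[R]_d) (A : {set 'I_K}).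
Local Notation S k := (SigmaTK m D pol k).
Local Notation B k := (stepmx D m pol k).

(* [E[hat Sigma^+_{t,k}] = (1/2) sum_{n <= M} B_k^n], so this is
   [Sigma_{t,k}^-1 - E[hat Sigma^+_{t,k}]]. *)
Definition bias_mx (k : 'I_K) : 'M[R]_d :=
  invmx (S k) - 2^-1 *: \sum_(0 <= n < M.+1) B k ^+ n.

Lemma bias_mx_mulmx k : bias_mx k *m S k = invmx (S k) *m S k - (1 - B k ^+ M.+1).
Proof.
have S_eq : S k = 2 *: (1 - B k).
  by rewrite /stepmx opprB addrC subrK scalerA mulfV ?pnatr_eq0 // scale1r.
rewrite mulmxBl; congr (_ - _).
rewrite S_eq -scalemxAl -scalemxAr scalerA mulVf ?pnatr_eq0 // scale1r.
exact: geometric_sum_mulr.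
Qed.

Definition arm_weight (x0 : d.-tuple R) (a0 : {set 'I_K}) (k : 'I_K) : R :=
  linloss theta x0 k * (k \in a0)%:R * (k \in A)%:R.

Definition arm_terms (x0 : d.-tuple R) (a0 : {set 'I_K}) (k : 'I_K) :=
  CprodTerm k 0 x (arm_weight x0 a0 k *: (invmx (S k) *m colv x0)) ::
  [seq CprodTerm k n x (- (arm_weight x0 a0 k / 2) *: colv x0) | n <- iota 0 M.+1].

Lemma integrand_arm_terms x0 a0 l :
  \sum_k dotv x (thetaHat m D pol (linloss theta) k x0 a0
                 - thetaTilde M (linloss theta) l k x0 a0) * (k \in A)%:R
  = \sum_k \sum_(q <- arm_terms x0 a0 k) eval_term q l.
Proof.
apply: eq_bigr => k _; rewrite big_cons big_map /= big_cons.
under eq_bigr do rewrite /eval_term /= -scalemxAr dotvZr.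
rewrite /eval_term /= take0 /= -!scalemxAr !dotvZr mul1mx -mulr_sumr.
rewrite /thetaHat /thetaTilde /SigPlus dotvBr !dotvZr -scalemxAl dotvZr.
rewrite mulmxDl mul1mx dotvDr mulmx_suml dotv_sumr /index_iota subSS subn0.
rewrite /arm_weight; ring.
Qed.

Lemma mean_arm_terms x0 a0 k :
  \sum_(q <- arm_terms x0 a0 k) mean_term D m pol M q
  = arm_weight x0 a0 k * dotv x (bias_mx k *m colv x0).
Proof.
rewrite big_cons big_map big_seq.
under eq_bigr => n /[!mem_iota] /andP[_ n_le].
  rewrite mean_termE (minn_idPl _); last by rewrite -ltnS.
  rewrite -scalemxAr dotvZr.
  over.
rewrite -big_seq -mulr_sumr mean_termE min0n expr0 mul1mx dotvZr.
rewrite /bias_mx mulmxBl dotvBr -scalemxAl dotvZr mulmx_suml dotv_sumr /index_iota subn0.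
by rewrite mulrBr mulNr mulrA.
Qed.


Lemma bias_formula :
  Epol m D pol (fun x0 a0 => Eiter m D pol M (fun l =>
     \sum_k dotv x (thetaHat m D pol (linloss theta) k x0 a0
                   - thetaTilde M (linloss theta) l k x0 a0) * (k \in A)%:R))
  = \sum_k (k \in A)%:R * dotv x (bias_mx k *m S k *m theta k).
Proof.
have -> : (fun x0 a0 => Eiter m D pol M (fun l =>
     \sum_k dotv x (thetaHat m D pol (linloss theta) k x0 a0
                   - thetaTilde M (linloss theta) l k x0 a0) * (k \in A)%:R))
  = fun x0 a0 => \sum_(k <- index_enum 'I_K) (0 + (k \in a0)%:R * (k \in A)%:R *
       (dotv ((bias_mx k)^T *m x) (colv x0) * dotv (colv x0) (theta k))).
  apply/funext => x0; apply/funext => a0.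
  have -> : (fun l => \sum_k dotv x (thetaHat m D pol (linloss theta) k x0 a0
                   - thetaTilde M (linloss theta) l k x0 a0) * (k \in A)%:R)
    = fun l => \sum_(q <- flatten [seq arm_terms x0 a0 k | k <- index_enum 'I_K]) eval_term q l.
    by apply/funext => l; rewrite integrand_arm_terms big_flatten big_map.
  rewrite Eiter_sum_terms // big_flatten big_map; apply: eq_bigr => k _.
  by rewrite mean_arm_terms /arm_weight /linloss -dotv_mulmxr; ring.
rewrite Epol_quadratic //; apply: eq_bigr => k _.
by rewrite add0r -dotv_mulmxr mulmxA.
Qed.

End Bias.

Section ArmBias.
Variables (R : realType) (d : nat) (D : probability (d.-tuple R) R).
Hypothesis d_gt0 : (0 < d)%N.
Hypothesis HDnorm : {ae D, forall x : d.-tuple R, norm2 (colv x) <= 1}.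
Hypothesis posSigma : posdef (SigmaD D).
Variables (lam : R) (K m : nat) (pol : d.-tuple R -> {set 'I_K} -> R).
Hypothesis Hlam : is_lambda_min (SigmaD D) lam.
Hypothesis m_gt0 : (0 < m)%N.
Hypothesis pol_meas : forall a, measurable_fun setT (fun x => pol x a).
Hypothesis pol_ge0 : forall x a, 0 <= pol x a.
Hypothesis pol_sum1 : forall x, \sum_(a | inAct m a) pol x a = 1.
Variable g : R.
Hypothesis g_ge0 : 0 <= g.
Hypothesis g_le : forall x k, g <= pol x [set k]%SET.
Variables (M : nat) (k : 'I_K).
Local Notation S := (SigmaTK m D pol k).
Local Notation B := (stepmx D m pol k).
Let rho := 1 - g * lam / 2.

Lemma qform_SigmaTK_lb v : g * lam * dotv v v <= qform S v.
Proof.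
apply: le_trans (qform_SigmaD_le_SigmaTK HDnorm pol_meas pol_ge0 pol_sum1 v m_gt0 g_ge0 (g_le^~ k)).
by rewrite -mulrA ler_wpM2l // rayleigh_lambda_min.
Qed.

Lemma trmx_stepmx : B^T = B.
Proof. by rewrite /stepmx linearB /= linearZ /= trmx1 trmx_SigmaTK. Qed.

Lemma qform_stepmx v : qform B v = dotv v v - 2^-1 * qform S v.
Proof. by rewrite /qform /stepmx mulmxBl mul1mx -scalemxAl dotvBr dotvZr. Qed.

Lemma qform_stepmx_ge0 v : 0 <= qform B v.
Proof.
rewrite qform_stepmx; have := qform_SigmaTK_le HDnorm pol_meas pol_ge0 pol_sum1 k v.
have := qform_SigmaTK_ge0 HDnorm pol_meas pol_ge0 pol_sum1 k v; lra.
Qed.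

Lemma qform_stepmx_le v : qform B v <= rho * dotv v v.
Proof. by rewrite qform_stepmx /rho; have := qform_SigmaTK_lb v; lra. Qed.

Lemma rho_ge0 : 0 <= rho.
Proof.
have [u u1] := exists_unit_vector R d_gt0.
by have := le_trans (qform_stepmx_ge0 u) (qform_stepmx_le u); rewrite u1 mulr1.
Qed.

Lemma qform_stepmx_exprn n v : 0 <= qform (B ^+ n) v <= rho ^+ n * dotv v v.
Proof. exact: qform_exprn_bound trmx_stepmx rho_ge0 qform_stepmx_ge0 qform_stepmx_le n v. Qed.

Lemma SigmaTK_unitmx : 0 < g * lam -> S \in unitmx.
Proof.
move=> glam_gt0; apply: posdef_unitmx; split=> [|v v_neq0]; first exact: trmx_SigmaTK.
rewrite posdef_qformE; apply: lt_le_trans (qform_SigmaTK_lb v).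
by rewrite mulr_gt0 // lt_def dotvv_eq0 v_neq0 dotvv_ge0.
Qed.

Lemma bias_term_le_rho (x th : 'cV[R]_d) : S \in unitmx ->
  dotv x x <= 1 -> dotv th th <= 1 ->
  `|dotv x (bias_mx D m pol M k *m S *m th)| <= rho ^+ M.+1.
Proof.
move=> S_unit x1 th1; rewrite bias_mx_mulmx mulVmx // opprB addrC subrK.
apply: sym_bilinear_le => //; rewrite ?exprn_ge0 ?rho_ge0 //.
  exact: trmxX trmx_stepmx.
by move=> v; have /andP[qB_ge0 qB_le] := qform_stepmx_exprn M.+1 v; rewrite ger0_norm.
Qed.

(* When [S] is singular, [invmx S = S], and the bias is [S^2 - 1 + B^(M+1)]. *)
Lemma bias_term_le1 (x th : 'cV[R]_d) : dotv x x <= 1 -> dotv th th <= 1 ->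
  `|dotv x (bias_mx D m pol M k *m S *m th)| <= 1.
Proof.
move=> x1 th1.
have rhoM_le1 : rho ^+ M.+1 <= 1.
  rewrite exprn_ile1 ?rho_ge0 // /rho.
  by have := mulr_ge0 g_ge0 (ltW (posdef_eigenvalue_gt0 posSigma Hlam.1)); lra.
have [S_unit|S_singular] := boolP (S \in unitmx).
  exact: le_trans (bias_term_le_rho S_unit x1 th1) rhoM_le1.
have psdS v : 0 <= qform S v := qform_SigmaTK_ge0 HDnorm pol_meas pol_ge0 pol_sum1 k v.
have S_le v : qform S v <= 1 * dotv v v.
  by rewrite mul1r (qform_SigmaTK_le HDnorm pol_meas pol_ge0 pol_sum1 k v).
rewrite bias_mx_mulmx invmx_out ?inE //.
apply: sym_bilinear_le => //.
  by rewrite !linearB /= trmx_mul trmx1 trmx_SigmaTK trmxX // trmx_stepmx.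
move=> v; have /andP[qB_ge0 qB_le] := qform_stepmx_exprn M.+1 v.
have SS_le := psd_mulmx_le v (trmx_SigmaTK D m pol k) ler01 psdS S_le.
have -> : qform (S *m S - (1 - B ^+ M.+1)) v
    = dotv (S *m v) (S *m v) - dotv v v + qform (B ^+ M.+1) v.
  rewrite /qform !mulmxBl mul1mx !dotvBr -mulmxA dotv_sym ?trmx_SigmaTK //; ring.
have := dotvv_ge0 (S *m v); have := le_trans qB_le (ler_wpM2r (dotvv_ge0 v) rhoM_le1).
rewrite expr1n mul1r in SS_le *; rewrite ler_norml; lra.
Qed.

End ArmBias.

Lemma sum_singletons (R : pzSemiRingType) (K m : nat) : (0 < m)%N ->
  \sum_(a : {set 'I_K} | inAct m a) ((#|a| == 1%N)%:R : R) = K%:R.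
Proof.
move=> m_gt0.
transitivity (\sum_(a in [set a : {set 'I_K} | #|a| == 1%N]%SET) (1 : R)).
  rewrite big_mkcond [RHS]big_mkcond; apply: eq_bigr => a _.
  by rewrite inE /inAct; case: eqP => [->|_]; rewrite ?m_gt0 ?if_same.
by rewrite sumr_const card_draws card_ord bin1.
Qed.

Section MixturePolicy.
Variables (R : realType) (d K m : nat) (gam : R) (p : d.-tuple R -> {set 'I_K} -> R).
Hypothesis K_gt0 : (0 < K)%N.
Hypothesis m_gt0 : (0 < m)%N.
Hypothesis gam_ge0 : 0 <= gam.
Hypothesis gam_le1 : gam <= 1.
Hypothesis p_meas : forall a, measurable_fun setT (fun x => p x a).
Hypothesis p_ge0 : forall x a, 0 <= p x a.
Hypothesis p_sum1 : forall x, \sum_(a | inAct m a) p x a = 1.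
Local Notation pol := (mixpol gam p).

Lemma measurable_mixpol a : measurable_fun setT (fun x => pol x a).
Proof.
apply: measurable_funD; last exact: measurable_cst.
by apply: measurable_funM; [exact: measurable_cst | exact: p_meas].
Qed.

Lemma mixpol_ge0 x a : 0 <= pol x a.
Proof. by rewrite addr_ge0 ?mulr_ge0 ?divr_ge0 ?subr_ge0. Qed.

Lemma mixpol_sum1 x : \sum_(a | inAct m a) pol x a = 1.
Proof.
rewrite big_split /= -!mulr_sumr p_sum1 -mulr_suml sum_singletons //.
by rewrite mulfV ?pnatr_eq0 -?lt0n // !mulr1 subrK.
Qed.

Lemma mixpol_singleton_ge x k : gam / K%:R <= pol x [set k]%SET.
Proof. by rewrite /mixpol cards1 eqxx mul1r lerDr mulr_ge0 ?subr_ge0. Qed.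

End MixturePolicy.

Lemma one_sub_exprn_le_expR (R : realType) (c b : R) (n : nat) :
  0 < b -> b <= n%:R -> 0 <= c -> 0 <= 1 - c / b -> (1 - c / b) ^+ n <= expR (- c).
Proof.
move=> b_gt0 b_le_n c_ge0 base_ge0.
have n_gt0 : (0 < n)%N by rewrite -(ltr_nat R) (lt_le_trans b_gt0).
apply: (@le_trans _ _ (expR (- (c / b)) ^+ n)).
  by rewrite ler_pXn2r ?nnegrE ?expR_ge0 // expR_ge1Dx.
rewrite -expRM_natl ler_expR mulrN lerN2 mulrCA ler_peMr //.
by rewrite ler_pdivlMr // mul1r.
Qed.

Section Schedule.
Variables (R : realType) (K m d T : nat) (lam : R) (Hs : nat -> R) (t : nat).
Hypothesis K_gt0 : (0 < K)%N.
Hypothesis lam_gt0 : 0 < lam.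
Hypothesis t_ge1 : (1 <= t)%N.
Hypothesis t_leT : (t <= T)%N.
Local Notation beta := (betaT K m d T lam Hs t).
Local Notation gam := (gammaT K m d T lam Hs t).

Lemma betaT_ge2 : 2 <= beta.
Proof. by rewrite /betaT le_max lexx. Qed.

Lemma betaT_gt0 : 0 < beta.
Proof. exact: lt_le_trans betaT_ge2. Qed.

Lemma gammaTE : gam = 4 * K%:R * ln t%:R / lam / beta.
Proof. by []. Qed.

Lemma ln_t_ge0 : 0 <= ln (t%:R : R).
Proof. by rewrite ln_ge0 // ler1n. Qed.

Lemma gammaT_ge0 : 0 <= gam.
Proof. by rewrite gammaTE !divr_ge0 ?mulr_ge0 ?ler0n ?ln_t_ge0 ?ltW ?betaT_gt0. Qed.

(* [beta_t >= c2 ln T = 8 K ln T / lambda], so in fact [gamma_t <= 1/2]. *)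
Lemma gammaT_le1 : gam <= 1.
Proof.
have lnT : ln (t%:R : R) <= ln T%:R.
  by rewrite ler_ln ?ler_nat // posrE ltr0n (leq_trans t_ge1).
have c2_le : c2 K lam * ln T%:R <= beta.
  by rewrite /betaT le_max [X in _ || X]le_max lexx orbT.
rewrite gammaTE ler_pdivrMr ?betaT_gt0 // mul1r; apply: le_trans c2_le.
have -> : 4 * K%:R * ln t%:R / lam = 4 * ln t%:R * (K%:R / lam) by ring.
have -> : c2 K lam * ln T%:R = 8 * ln T%:R * (K%:R / lam) by rewrite /c2; ring.
apply: ler_pM => //.
- by rewrite mulr_ge0 ?ln_t_ge0.
- by rewrite divr_ge0 // ltW.
- by have := ln_t_ge0; lra.
Qed.

Lemma betaT_le_Msamp : beta <= (Msamp K m d T lam Hs t)%:R.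
Proof.
rewrite /Msamp /etaT invrK natr_absz ger0_norm ?ceil_ge //.
by rewrite ceil_ge0 (lt_trans _ betaT_gt0) // ltrN10.
Qed.

Lemma exploration_eigen_rate : gam / K%:R * lam / 2 = 2 * ln t%:R / beta.
Proof. by rewrite gammaTE; field; rewrite ?gt_eqF ?ltr0n ?betaT_gt0. Qed.

End Schedule.

Section RoundBias.
Variables (R : realType) (K m d T : nat) (D : probability (d.-tuple R) R).
Hypotheses (K_gt0 : (0 < K)%N) (m_gt0 : (0 < m)%N) (d_gt0 : (0 < d)%N).
Hypothesis HDnorm : {ae D, forall x : d.-tuple R, norm2 (colv x) <= 1}.
Hypothesis posSigma : posdef (SigmaD D).
Variable lam : R.
Hypothesis Hlam : is_lambda_min (SigmaD D) lam.
Variables (t : nat) (Hs : nat -> R).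
Hypotheses (t_ge1 : (1 <= t)%N) (t_leT : (t <= T)%N).
Variable p : d.-tuple R -> {set 'I_K} -> R.
Hypothesis p_meas : forall a, measurable_fun setT (fun x => p x a).
Hypothesis p_ge0 : forall x a, 0 <= p x a.
Hypothesis p_sum1 : forall x, \sum_(a | inAct m a) p x a = 1.
Local Notation gam := (gammaT K m d T lam Hs t).
Local Notation pol := (mixpol gam p).
Local Notation M := (Msamp K m d T lam Hs t).

Let lam_gt0 : 0 < lam := posdef_eigenvalue_gt0 posSigma Hlam.1.
Let gam_ge0 : 0 <= gam := gammaT_ge0 K m d T Hs lam_gt0 t_ge1.
Let gam_le1 : gam <= 1 := gammaT_le1 K m d Hs lam_gt0 t_ge1 t_leT.
Let pol_meas := measurable_mixpol gam p_meas.
Let pol_ge0 := mixpol_ge0 gam_ge0 gam_le1 p_ge0.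
Let pol_sum1 := mixpol_sum1 gam K_gt0 m_gt0 p_sum1.
Let expl_ge0 : 0 <= gam / K%:R := divr_ge0 gam_ge0 (ler0n _ _).
Let pol_expl := mixpol_singleton_ge gam_le1 p_ge0.

Lemma round_arm_bias_le (x th : 'cV[R]_d) k : dotv x x <= 1 -> dotv th th <= 1 ->
  `|dotv x (bias_mx D m pol M k *m SigmaTK m D pol k *m th)| <= (t%:R ^+ 2)^-1.
Proof.
move=> x1 th1; have [t_le1|t_gt1] := leqP t 1.
  apply: le_trans (bias_term_le1 d_gt0 HDnorm posSigma Hlam m_gt0 pol_meas pol_ge0 pol_sum1
    expl_ge0 pol_expl M k x1 th1) _.
  have t1 : t = 1%N by apply/eqP; rewrite eqn_leq t_le1 t_ge1.
  by rewrite t1 expr1n invr1.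
have ln_t_gt0 : 0 < ln (t%:R : R) by rewrite ln_gt0 // ltr1n.
have rate := exploration_eigen_rate m d T Hs t K_gt0 lam_gt0.
have beta_gt0 := betaT_gt0 K m d T lam Hs t.
have S_unit : SigmaTK m D pol k \in unitmx.
  apply: (SigmaTK_unitmx d_gt0 HDnorm posSigma Hlam m_gt0 pol_meas pol_ge0 pol_sum1
    expl_ge0 pol_expl).
  have : 0 < gam / K%:R * lam / 2 by rewrite rate divr_gt0 ?mulr_gt0.
  lra.
apply: le_trans (bias_term_le_rho d_gt0 HDnorm posSigma Hlam m_gt0 pol_meas pol_ge0 pol_sum1
  expl_ge0 pol_expl M S_unit x1 th1) _.
have base_ge0 := rho_ge0 d_gt0 HDnorm posSigma Hlam m_gt0 pol_meas pol_ge0 pol_sum1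
  expl_ge0 pol_expl k.
rewrite rate in base_ge0 *.
apply: le_trans (one_sub_exprn_le_expR beta_gt0 _ _ base_ge0) _.
- by apply: le_trans (betaT_le_Msamp _ _ _ _ _ _ _) _; rewrite ler_nat.
- by rewrite mulr_ge0 // ltW.
- by rewrite expRN -[2]/(2%:R) expRM_natl lnK // posrE ltr0n (leq_trans _ t_ge1).
Qed.

Lemma round_bias_le (theta : 'I_K -> 'cV[R]_d) (x : 'cV[R]_d) (A : {set 'I_K}) :
  (forall k, dotv (theta k) (theta k) <= 1) -> dotv x x <= 1 -> inAct m A ->
  Epol m D pol (fun x0 a0 => Eiter m D pol M (fun l =>
    \sum_k dotv x (thetaHat m D pol (linloss theta) k x0 a0
                   - thetaTilde M (linloss theta) l k x0 a0) * (k \in A)%:R))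
  <= m%:R / (t%:R ^+ 2).
Proof.
move=> theta1 x1 A_act; rewrite (bias_formula HDnorm pol_meas pol_ge0 pol_sum1).
apply: (@le_trans _ _ (\sum_k (k \in A)%:R * (t%:R ^+ 2)^-1)).
  apply: ler_sum => k _; case: (k \in A); rewrite ?mul0r ?mul1r //.
  exact: le_trans (ler_norm _) (round_arm_bias_le k x1 (theta1 k)).
rewrite -mulr_suml ler_wpM2r ?invr_ge0 ?exprn_ge0 //.
have -> : \sum_k ((k \in A)%:R : R) = #|A|%:R.
  by rewrite -sum1_card natr_sum [RHS]big_mkcond; apply: eq_bigr => k _; case: (k \in A).
by rewrite ler_nat.
Qed.

End RoundBias.

Theorem lemma2 (R : realType) (K m d T : nat)
  (HK : (2 <= K)%N) (Hm1 : (1 <= m)%N) (HmK : (m < K)%N)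
  (Hd : (1 <= d)%N) (HT : (3 <= T)%N)
  (* context distribution *)
  (D : probability (d.-tuple R) R)
  (HDnorm : {ae D, forall x : d.-tuple R, norm2 (colv x) <= 1})
  (HSig : posdef (SigmaD D))
  (lam : R) (Hlam : is_lambda_min (SigmaD D) lam)
  (Hc1 : 1 <= c1 K m d T lam)
  (* round t and the history up to round t-1 *)
  (t : nat) (Ht1 : (1 <= t)%N) (HtT : (t <= T)%N)
  (tht : nat -> 'I_K -> 'cV[R]_d)   (* tilde theta_{s,k}, s < t *)
  (Hs : nat -> R) (HHs : forall s, 0 <= Hs s)   (* H(Abar_s(X_s)), s < t *)
  (* FTRL point Abar_t and a distribution p_t(.|x) with mean Abar_t(x) *)
  (Abar : d.-tuple R -> 'I_K -> R)
  (HAbar : forall x, in_convA m (Abar x) /\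
     forall a, in_convA m a ->
       ftrl_obj tht t (etaT K m d T lam Hs t) (colv x) (Abar x)
       <= ftrl_obj tht t (etaT K m d T lam Hs t) (colv x) a)
  (p : d.-tuple R -> {set 'I_K} -> R)
  (Hpmeas : forall a, measurable_fun setT (fun x => p x a))
  (Hp0 : forall x a, 0 <= p x a)
  (HpA : forall x a, ~~ inAct m a -> p x a = 0)
  (Hp1 : forall x, \sum_(a | inAct m a) p x a = 1)
  (Hpmean : forall x k, \sum_(a | inAct m a) p x a * (k \in a)%:R = Abar x k)
  (* round-t environment vectors; losses l_t(x,k) = <x, theta_{t,k}> *)
  (theta : 'I_K -> 'cV[R]_d) (Htheta : forall k, norm2 (theta k) <= 1)
  (* the evaluation point *)
  (x : 'cV[R]_d) (Hx : norm2 x <= 1) :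
  let pol := mixpol (gammaT K m d T lam Hs t) p in
  let M := Msamp K m d T lam Hs t in
  let loss := linloss theta in
  forall A : {set 'I_K}, inAct m A ->
    Epol m D pol (fun x0 a0 =>
      Eiter m D pol M (fun l =>
        \sum_k dotv x (thetaHat m D pol loss k x0 a0
                       - thetaTilde M loss l k x0 a0) * (k \in A)%:R))
    <= m%:R / (t%:R ^+ 2).
Proof.
move=> pol M loss A A_act.
exact (round_bias_le (ltnW HK) Hm1 Hd HDnorm HSig Hlam Hs Ht1 HtT Hpmeas Hp0 Hp1
  (fun k => norm2_le1 (Htheta k)) (norm2_le1 Hx) A_act).
Qed.
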